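(* Let $G$ be a finite group and $p$ a prime. Then $|G|_{p'}\,\chi(\mathcal F^*_G)$ is an integer.
   Context: $|G|_{p'}$ is the largest divisor of $|G|$ prime to $p$. $\mathcal F^*_G$ is the Frobenius (fusion) category of nonidentity $p$-subgroups: objects are the nonidentity $p$-subgroups of $G$, morphisms $\mathcal F^*_G(H,K)=C_G(H)\backslash N_G(H,K)$ with $N_G(H,K)=\{g\in G: g^{-1}Hg\le K\}$, composition induced by multiplication. $\chi$ is Leinster's Euler characteristic: for a finite category $\mathcal C$, a weighting is $k^\bullet$ with $\sum_b|\mathcal C(a,b)|k^b=1$ for all $a$, a coweighting is $k_\bullet$ with $\sum_ak_a|\mathcal C(a,b)|=1$ for all $b$, and if both exist $\chi(\mathcal C)=\sum_bk^b=\sum_ak_a$ (this exists for $\mathcal F^*_G$). *)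

From mathcomp Require Import all_boot all_order all_algebra all_fingroup all_solvable.
Set Implicit Arguments. Unset Strict Implicit. Unset Printing Implicit Defensive.
Import GRing.Theory Num.Theory.

Local Open Scope group_scope.

Definition Fobj (gT : finGroupType) (G : {group gT}) (p : nat) : pred {group gT} :=
  [pred H : {group gT} | [&& H \subset G, p.-group H & H :!=: 1]].

(* N_G(H,K) = { g in G | g^-1 H g <= K }  (H :^ g = g^-1 H g in mathcomp). *)
Definition Ntrans (gT : finGroupType) (G H K : {set gT}) : {set gT} :=
  [set g in G | H :^ g \subset K].

(* |F*_G(H,K)| = number of cosets C_G(H) g, g in N_G(H,K), i.e. |C_G(H)\N_G(H,K)|. *)
Definition Fhom (gT : finGroupType) (G H K : {set gT}) : nat :=
  #|rcosets 'C_G(H) (Ntrans G H K)|.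

Definition is_weighting (gT : finGroupType) (G : {group gT}) (p : nat)
    (k : {group gT} -> rat) : Prop :=
  forall a : {group gT}, a \in Fobj G p ->
    (\sum_(b : {group gT} | b \in Fobj G p) (Fhom G a b)%:R * k b = 1)%R.

Definition is_coweighting (gT : finGroupType) (G : {group gT}) (p : nat)
    (k : {group gT} -> rat) : Prop :=
  forall b : {group gT}, b \in Fobj G p ->
    (\sum_(a : {group gT} | a \in Fobj G p) k a * (Fhom G a b)%:R = 1)%R.

Definition wsum (gT : finGroupType) (G : {group gT}) (p : nat)
    (k : {group gT} -> rat) : rat :=
  (\sum_(b : {group gT} | b \in Fobj G p) k b)%R.

(* Both the weighting and the coweighting are alternating sums over chains s of
   objects, weighted by |C_G(s)|: k^b sums over the chains with least element b,
   k_a over those with greatest element a.  Since |F*(a,b)| = |N_G(a,b)|/|C_G(a)|,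
   their defining identities reduce, after summing over the conjugates of a, to
   the vanishing of signed chain counts of posets with a cone point.  This gives
     chi = 1 + (1/|G|) * sum_s -(-1)^|s| |C_G(s)|,
   and the last sum is a signed count of pairs (s, g) with g centralizing s.  A
   Sylow p-subgroup S acts on these pairs; for every nontrivial Q <= S the
   Q-fixed pairs cancel by Quillen's contraction a <= a<Q> >= Q, so |S| = |G|_p
   divides the sum. *)

From mathcomp Require Import all_boot all_order all_algebra all_fingroup all_solvable.
From mathcomp Require Import zify ring.
Set Implicit Arguments. Unset Strict Implicit. Unset Printing Implicit Defensive.
Import GRing.Theory Num.Theory.

Local Open Scope ring_scope.

Lemma sum_sign_reversing_involution (I : finType) (R : numDomainType)
    (phi : I -> I) (P : pred I) (w : I -> R) :
  involutive phi -> (forall i, P i -> P (phi i)) ->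
  (forall i, P i -> w (phi i) = - w i) -> \sum_(i | P i) w i = 0.
Proof.
move=> phiK Pphi wphi.
have sumN : \sum_(i | P i) w i = - \sum_(i | P i) w i.
  rewrite -sumrN [RHS](reindex_inj (can_inj phiK)) /=.
  apply: eq_big => [i | i Pi]; last by rewrite wphi ?opprK.
  by apply/idP/idP => [/Pphi | /Pphi]; rewrite ?phiK.
have : (\sum_(i | P i) w i) *+ 2 == 0 by rewrite mulr2n {2}sumN subrr.
by rewrite mulrn_eq0 => /eqP.
Qed.

Lemma sum_exchange_uniq (I J : finType) (R : nmodType) (P : pred I)
    (Q : J -> I -> bool) (F : J -> R) :
  (forall j i i', Q j i -> Q j i' -> i = i') ->
  \sum_(i | P i) \sum_(j | Q j i) F j = \sum_(j | [exists i, P i && Q j i]) F j.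
Proof.
move=> Quniq; rewrite (exchange_big_dep xpredT) //= [RHS]big_mkcond /=.
apply: eq_bigr => j _; case: existsP => [[i /andP[Pi Qji]] | noQ].
  rewrite (eq_bigl (pred1 i)) ?big_pred1_eq // => i' /=.
  by apply/andP/eqP => [[_ /(Quniq _ _ _ Qji)] | ->].
by rewrite big_pred0 // => i; apply/negP => PQi; apply: noQ; exists i.
Qed.

Section Toggle.
Variable T : finType.
Implicit Types (z : T) (s : {set T}).

Definition toggle z s := if z \in s then s :\ z else z |: s.

Lemma toggleK z : involutive (toggle z).
Proof.
move=> s; rewrite {2}/toggle; case: ifP => zs; rewrite /toggle.
  by rewrite setD11 setD1K.
by rewrite setU11 setU1K ?zs.
Qed.

Lemma setU1_toggle z s : z |: toggle z s = z |: s.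
Proof.
rewrite /toggle; case: ifP => zs; last by rewrite setUA setUid.
by rewrite setD1K //; apply/esym/setUidPr; rewrite sub1set.
Qed.

Lemma sign_toggle z s : (-1) ^+ #|toggle z s| = - (-1) ^+ #|s| :> int.
Proof.
rewrite /toggle; case: ifP => zs.
  by rewrite -[in RHS](setD1K zs) cardsU1 !inE eqxx /= exprS mulN1r opprK.
by rewrite cardsU1 zs /= exprS mulN1r.
Qed.

End Toggle.

Section Chains.
Variable gT : finGroupType.
Implicit Types (A B s : {set {group gT}}) (a b x y z : {group gT}).

Definition nested a b := (a \subset b) || (b \subset a).

Definition is_chain A s := (s \subset A) && [forall a in s, forall b in s, nested a b].

Definition chain_sign s : int := (-1) ^+ #|s|.

(* Minus the reduced Euler characteristic of the order complex of A: the empty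
   chain is counted. *)
Definition signed_chain_sum A : int := \sum_(s | is_chain A s) chain_sign s.

Lemma nestedC a b : nested a b = nested b a.
Proof. by rewrite /nested orbC. Qed.

Lemma nestedxx a : nested a a.
Proof. by rewrite /nested subxx. Qed.

Lemma is_chainP A s :
  reflect (s \subset A /\ {in s &, forall a b, nested a b}) (is_chain A s).
Proof.
apply: (iffP andP) => [[sA /forall_inP ns] | [sA ns]]; split => //.
  by move=> a b sa sb; move/forall_inP: (ns a sa); apply.
by apply/forall_inP => a sa; apply/forall_inP => b sb; apply: ns.
Qed.

Lemma is_chain0 A : is_chain A set0.
Proof. by apply/is_chainP; split=> [|a]; rewrite ?sub0set ?inE. Qed.

Lemma is_chain_sub A s : is_chain A s -> s \subset A.
Proof. by case/andP. Qed.

Lemma is_chain_setIdP A (P : pred {group gT}) s :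
  is_chain [set a in A | P a] s = is_chain A s && [forall a in s, P a].
Proof.
rewrite /is_chain [RHS]andbAC; congr (_ && _).
apply/subsetP/andP => [sAP | [/subsetP sA /forall_inP sP] a sa].
  by split; [apply/subsetP | apply/forall_inP] => a /sAP; rewrite inE => /andP[].
by rewrite inE sA ?sP.
Qed.

Lemma is_chain_toggle A s z : z \in A -> {in s, forall y, nested y z} ->
  is_chain A s -> is_chain A (toggle z s).
Proof.
move=> zA nz /is_chainP[sA ns]; apply/is_chainP; split.
  rewrite /toggle; case: ifP => _; first by rewrite subDset subsetU ?sA ?orbT.
  by rewrite subUset sub1set zA sA.
have in_toggle y : y \in toggle z s -> y = z \/ y \in s.
  rewrite /toggle; case: ifP => _; rewrite !inE; first by case/andP; right.
  by case/orP => [/eqP|]; [left | right].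
move=> a b /in_toggle[-> | sa] /in_toggle[-> | sb]; rewrite ?nestedxx ?nz //.
  by rewrite nestedC nz.
exact: ns.
Qed.

Lemma signed_chain_sum_cone A z :
  z \in A -> {in A, forall y, nested y z} -> signed_chain_sum A = 0.
Proof.
move=> zA nz; apply: (sum_sign_reversing_involution (toggleK z)) => s cs.
  have sA := is_chain_sub cs.
  by apply: is_chain_toggle cs => // y sy; apply: nz (subsetP sA y sy).
exact: sign_toggle.
Qed.

(* Chains through x are cancelled by toggling z, which is nested with all of them. *)
Lemma signed_chain_sum_setD1 A x z : x \in A -> z \in A -> z != x ->
  {in A, forall y, nested y x -> nested y z} ->
  signed_chain_sum A = signed_chain_sum (A :\ x).
Proof.
move=> xA zA zx nxz; rewrite /signed_chain_sum (bigID (fun s => x \in s)) /=.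
rewrite (@sum_sign_reversing_involution _ _ (toggle z)) ?add0r; first last.
- by move=> s _; apply: sign_toggle.
- move=> s /andP[cs xs]; apply/andP; split.
    apply: is_chain_toggle => // y sy; case/is_chainP: cs => sA ns.
    by apply: nxz; [apply: (subsetP sA) | apply: ns].
  by rewrite /toggle; case: ifP; rewrite !inE ?xs ?(negPf zx) ?orbT // eq_sym zx.
- exact: toggleK.
apply: eq_bigl => s; apply/andP/is_chainP => [[/is_chainP[sA ns] xs] | [sA ns]].
  split=> //; apply/subsetP => y sy; rewrite !inE (subsetP sA) // andbT.
  by apply: contraNneq xs => <-.
split; last by apply/negP => /(subsetP sA); rewrite !inE eqxx.
by apply/is_chainP; split=> //; apply: subset_trans sA (subsetDl _ _).
Qed.

Section QuillenJoin.
Variables (A : {set {group gT}}) (Q : {group gT}).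
Hypotheses (QA : Q \in A) (joinA : forall a, a \in A -> (a <*> Q)%G \in A).

Let P := [set a in A | Q \subset a].

Let signed_chain_sum_drop_max B x :
  B \subset A -> P \subset B -> x \in B :\: P -> {in B :\: P, forall y, #|y| <= #|x|}%N ->
  signed_chain_sum B = signed_chain_sum (B :\ x).
Proof.
move=> BA PB /setDP[xB nPx] xmax; have xA := subsetP BA x xB.
have nQx : ~~ (Q \subset x) by rewrite inE xA in nPx.
set z := (x <*> Q)%G; have xz : x \subset z := joing_subl x Q.
have zP : z \in P by rewrite inE joinA //= joing_subr.
apply: signed_chain_sum_setD1 (subsetP PB z zP) _ _ => //.
  by apply: contraNneq nQx => <-; apply: joing_subr.
move=> y yB /orP[yx | xy]; first by rewrite /nested (subset_trans yx xz).
have [| nPy] := boolP (y \in P).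
  by rewrite inE => /andP[_ Qy]; rewrite /nested join_subG xy Qy orbT.
have yx : (#|y| <= #|x|)%N by apply: xmax; rewrite in_setD nPy.
have -> : y = x by apply/val_inj/eqP; rewrite eq_sym eqEcard xy yx.
by rewrite /nested xz.
Qed.

Let signed_chain_sum_above B :
  B \subset A -> P \subset B -> signed_chain_sum B = signed_chain_sum P.
Proof.
elim: {B}_.+1 {-2}B (ltnSn #|B|) => // n IH B ltBn BA PB.
have [BP | /set0Pn[x0 x0B]] := eqVneq (B :\: P) set0.
  by have -> : B = P by apply/eqP; rewrite eqEsubset PB -setD_eq0 BP eqxx.
have [x xBP xmax] := arg_maxnP (fun g : {group gT} => #|g|) x0B.
rewrite (signed_chain_sum_drop_max BA PB xBP xmax); move/setDP: xBP => [xB nPx].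
apply: IH; first by rewrite (cardsD1 x) xB in ltBn.
  exact: subset_trans (subsetDl _ _) BA.
by apply/subsetP => a Pa; rewrite !inE (subsetP PB) // andbT; apply: contraNneq nPx => <-.
Qed.

(* Quillen: a <= a <*> Q >= Q contracts the order complex of A onto the cone at Q. *)
Lemma signed_chain_sum_join : signed_chain_sum A = 0.
Proof.
rewrite signed_chain_sum_above //; last by apply/subsetP => a /setIdP[].
apply: (signed_chain_sum_cone (z := Q)); first by rewrite inE QA subxx.
by move=> y /setIdP[_ Qy]; rewrite /nested Qy orbT.
Qed.

End QuillenJoin.

Definition least s b := (b \in s) && [forall y in s, b \subset y].

Definition greatest s a := (a \in s) && [forall y in s, y \subset a].

Lemma least_uniq s b b' : least s b -> least s b' -> b = b'.
Proof.
move=> /andP[sb /forall_inP lb] /andP[sb' /forall_inP lb'].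
by apply/val_inj/eqP; rewrite eqEsubset lb ?lb'.
Qed.

Lemma greatest_uniq s a a' : greatest s a -> greatest s a' -> a = a'.
Proof.
move=> /andP[sa /forall_inP ga] /andP[sa' /forall_inP ga'].
by apply/val_inj/eqP; rewrite eqEsubset ga ?ga'.
Qed.

Lemma chain_least A s : is_chain A s -> s != set0 -> exists b, least s b.
Proof.
case/is_chainP => _ ns /set0Pn[b0 sb0].
have [b sb bmin] := arg_minnP (fun g : {group gT} => #|g|) sb0.
exists b; apply/andP; split=> //; apply/forall_inP => y sy.
case/orP: (ns b y sb sy) => // yb.
by have <- : y = b by apply/val_inj/eqP; rewrite eqEcard yb bmin.
Qed.

Lemma chain_greatest A s : is_chain A s -> s != set0 -> exists a, greatest s a.
Proof.
case/is_chainP => _ ns /set0Pn[a0 sa0].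
have [a sa amax] := arg_maxnP (fun g : {group gT} => #|g|) sa0.
exists a; apply/andP; split=> //; apply/forall_inP => y sy.
case/orP: (ns a y sa sy) => // ay.
by have <- : a = y by apply/val_inj/eqP; rewrite eqEcard ay; apply: amax.
Qed.

Lemma exists_least_above A s a :
  [exists b, ((b \in A) && (a \subset b)) && (is_chain A s && least s b)] =
  is_chain [set b in A | a \subset b] s && (s != set0).
Proof.
rewrite is_chain_setIdP; apply/existsP/andP => [[b] | [/andP[cs /forall_inP above] ne]].
  case/andP=> /andP[_ ab] /andP[cs /andP[sb /forall_inP lb]].
  split; last by apply/set0Pn; exists b.
  by rewrite cs; apply/forall_inP => y sy; apply: subset_trans ab (lb y sy).
have [b /[dup] lb /andP[sb _]] := chain_least cs ne; exists b.
by rewrite cs lb (subsetP (is_chain_sub cs)) // above.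
Qed.

Lemma exists_greatest_below A s b :
  [exists a, ((a \in A) && (a \subset b)) && (is_chain A s && greatest s a)] =
  is_chain [set a in A | a \subset b] s && (s != set0).
Proof.
rewrite is_chain_setIdP; apply/existsP/andP => [[a] | [/andP[cs /forall_inP below] ne]].
  case/andP=> /andP[_ ab] /andP[cs /andP[sa /forall_inP ga]].
  split; last by apply/set0Pn; exists a.
  by rewrite cs; apply/forall_inP => y sy; apply: subset_trans (ga y sy) ab.
have [a /[dup] ga /andP[sa _]] := chain_greatest cs ne; exists a.
by rewrite cs ga (subsetP (is_chain_sub cs)) // below.
Qed.

Lemma exists_greatest A s :
  [exists a, (a \in A) && (is_chain A s && greatest s a)] = is_chain A s && (s != set0).
Proof.
apply/existsP/andP => [[a /and3P[_ cs /andP[sa _]]] | [cs ne]].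
  by split=> //; apply/set0Pn; exists a.
have [a /[dup] ga /andP[sa _]] := chain_greatest cs ne; exists a.
by rewrite cs ga (subsetP (is_chain_sub cs)).
Qed.

Lemma astab1_chain A s : is_chain A s -> ('C[s | 'JG^*] = \bigcap_(a in s) 'N(a))%g.
Proof.
case/is_chainP=> _ ns; apply/setP => x; apply/astab1P/bigcapP => [sx a sa | nsx].
  have sax : (a :^ x)%G \in s by rewrite -sx; apply: (mem_setact 'JG).
  apply/normP/eqP; case/orP: (ns _ _ sa sax) => [saax | saxa].
    by rewrite eq_sym eqEcard saax cardJg leqnn.
  by rewrite eqEcard saxa cardJg leqnn.
rewrite /= setactE -[RHS]imset_id; apply: eq_in_imset => a sa.
by apply: val_inj; apply/normP/nsx.
Qed.

End Chains.

Section StabilizerSums.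
Local Open Scope group_scope.
Variables (aT : finGroupType) (Y : finType) (to : {action aT &-> Y}).
Variables (S : {group aT}) (f : Y -> int).
Hypothesis f_invariant : forall y x, x \in S -> f (to y x) = f y.
Hypothesis fixed_sum_eq0 : forall Q : {group aT}, Q \subset S -> Q :!=: 1 ->
  \sum_(y | Q \subset 'C[y | to]) f y = 0.

Let stab_sum (T : {set aT}) : int := \sum_(y | 'C_S[y | to] == T) f y.

Let sum_by_stab (P : pred {group aT}) :
  \sum_(y | P 'C_S[y | to]%G) f y = \sum_(U : {group aT} | P U) stab_sum U.
Proof.
rewrite (partition_big (fun y => 'C_S[y | to]%G) P) //=.
apply: eq_bigr => U PU; apply: eq_bigl => y.
apply/andP/eqP => [[_ /eqP <-] // | defU].
by have -> : 'C_S[y | to]%G = U by apply: val_inj.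
Qed.

Let stab_sum_notsub (T : {set aT}) : ~~ (T \subset S) -> stab_sum T = 0.
Proof.
move=> nsTS; rewrite /stab_sum big_pred0 // => y.
by apply: contraNF nsTS => /eqP <-; apply: subsetIl.
Qed.

Let stab_sum_eq0 (T : {group aT}) : T :!=: 1 -> stab_sum T = 0.
Proof.
elim: {T}_.+1 {-2}T (ltnSn (#|S| - #|T|)) => // n IH T leTn ntT.
have [sTS | /stab_sum_notsub //] := boolP (T \subset S).
have := fixed_sum_eq0 sTS ntT.
rewrite (eq_bigl (fun y => T \subset 'C_S[y | to]%G)); last first.
  by move=> y; rewrite /= [in RHS]subsetI sTS.
rewrite (sum_by_stab (fun U => T \subset U)) (bigD1 T) //= big1 ?addr0 //.
move=> U /andP[sTU neUT].
have [sUS | /stab_sum_notsub //] := boolP (U \subset S).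
have ltTU : T \proper U.
  by rewrite properEneq sTU andbT; apply: contraNneq neUT => /val_inj ->.
apply: IH; last by apply: contraNneq ntT => U1; rewrite -subG1 -U1.
have := proper_card ltTU; have := subset_leq_card sUS; move: leTn; lia.
Qed.

(* Only the points with trivial stabilizer survive; they form regular S-orbits. *)
Lemma dvdz_card_sum_fixed_sums_eq0 : (#|S|%:Z %| \sum_y f y)%Z.
Proof.
rewrite -[\sum_y f y]/(\sum_(y | predT 'C_S[y | to]%G) f y) sum_by_stab.
rewrite (bigD1 1%G) //= big1 ?addr0 => [|U neU1]; last first.
  by apply: stab_sum_eq0; apply: contra_neq neU1 => U1; apply: val_inj.
set Y1 := [set y | 'C_S[y | to] == 1].
have -> : stab_sum 1 = \sum_(y in Y1) f y by apply: eq_bigl => y; rewrite inE.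
have actY1 : [acts S, on Y1 | to].
  apply/subsetP => x Sx; rewrite !inE /=; apply/subsetP => y; rewrite !inE.
  by rewrite astab1_act => /eqP Cy1; rewrite -(conjGid Sx) -conjIg Cy1 conjs1g.
have partY1 := orbit_partition actY1.
rewrite -(cover_partition partY1) big_trivIset; last by case/and3P: partY1.
apply: rpred_sum => _ /imsetP[y Y1y ->].
rewrite (eq_bigr (fun=> f y)) => [|_ /imsetP[x Sx ->]]; last exact: f_invariant.
move: Y1y; rewrite sumr_const card_orbit inE => /eqP ->; rewrite indexg1.
by rewrite -mulr_natr dvdz_mull // natz.
Qed.

End StabilizerSums.

Section ProductAction.
Variables (aT : finGroupType) (rT1 rT2 : finType).
Variables (to1 : {action aT &-> rT1}) (to2 : {action aT &-> rT2}).

Definition prod_act (y : rT1 * rT2) (x : aT) := (to1 y.1 x, to2 y.2 x).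

Lemma prod_is_action : is_action setT prod_act.
Proof.
by apply: is_total_action => [[y1 y2] | [y1 y2] x1 x2]; rewrite /prod_act /= ?act1 ?actM.
Qed.

Canonical prod_action := Action prod_is_action.

Lemma astab1_prod y : ('C[y | prod_action] = 'C[y.1 | to1] :&: 'C[y.2 | to2])%g.
Proof.
apply/setP => x; rewrite in_setI; apply/astab1P/andP => [e | [/astab1P e1 /astab1P e2]].
  by split; apply/astab1P; rewrite -[in RHS]e.
by rewrite /= /prod_act e1 e2; case: y {e1 e2}.
Qed.

End ProductAction.

Section GroupFacts.
Variable gT : finGroupType.
Local Open Scope group_scope.

Lemma cent_set0 : 'C(set0) = [set: gT].
Proof. by apply/setP => x; rewrite inE; apply/centP => y; rewrite inE. Qed.

Lemma cent_bigcup (I : finType) (P : pred I) (A : I -> {set gT}) :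
  'C(\bigcup_(i | P i) A i) = \bigcap_(i | P i) 'C(A i).
Proof. exact: (big_morph _ (@centU gT) cent_set0). Qed.

Lemma rcosets_partition_stable (H : {group gT}) (A : {set gT}) :
  H * A = A -> partition (rcosets H A) A.
Proof.
move=> defA; have classE x : x \in A -> [set y in A | rcoset H x == rcoset H y] = H :* x.
  move=> Ax; apply/setP => y; rewrite inE !rcosetE (sameP eqP rcoset_eqP) rcoset_sym.
  by apply/andb_idl => /rcosetP[h Hh ->]; rewrite -defA mem_mulg.
have := preim_partitionP (rcoset H) A; congr (partition _ _); apply/setP => X.
by apply/imsetP/rcosetsP => -[x Ax ->]; exists x; rewrite ?classE.
Qed.

Lemma card_rcosets_stable (H : {group gT}) (A : {set gT}) :
  H * A = A -> (#|rcosets H A| * #|H|)%N = #|A|.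
Proof.
move=> defA; apply/esym/card_uniform_partition; last exact: rcosets_partition_stable.
by move=> _ /rcosetsP[x _ ->]; rewrite card_rcoset.
Qed.

End GroupFacts.

Lemma wsum_weighting_coweighting (gT : finGroupType) (G : {group gT}) (p : nat)
    (k k' : {group gT} -> rat) :
  is_weighting G p k -> is_coweighting G p k' -> wsum G p k = wsum G p k'.
Proof.
move=> wk ck'; rewrite /wsum.
transitivity (\sum_(b | b \in Fobj G p)
                \sum_(a | a \in Fobj G p) k' a * (Fhom G a b)%:R * k b).
  by apply: eq_bigr => b Fb; rewrite -mulr_suml ck' ?mul1r.
rewrite exchange_big /=; apply: eq_bigr => a Fa.
under eq_bigr => b _ do rewrite -mulrA.
by rewrite -mulr_sumr wk ?mulr1.
Qed.

Section FrobeniusCategory.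
Variables (gT : finGroupType) (G : {group gT}) (p : nat).
Implicit Types (s : {set {group gT}}) (a b : {group gT}).

Definition Fobjs : {set {group gT}} := [set a in Fobj G p].

Lemma Fobjs_sub a : a \in Fobjs -> (a \subset G)%g.
Proof. by rewrite !inE => /and3P[]. Qed.

Lemma Fobjs_conj a x : (x \in G)%g -> a \in Fobjs -> (a :^ x)%G \in Fobjs.
Proof.
move=> Gx; rewrite !inE /= => /and3P[saG pa a1].
by rewrite pgroupJ pa conjsg_eq1 a1 -(conjGid Gx) conjSg saG.
Qed.

Lemma Fhom_mul_card_cent a b :
  (a \subset G)%g -> (Fhom G a b * #|'C_G(a)%g|)%N = #|Ntrans G a b|.
Proof.
move=> saG; apply: card_rcosets_stable; apply/eqP; rewrite eqEsubset mulG_subr andbT.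
apply/subsetP => _ /mulsgP[c y /setIP[Gc cac] /setIdP[Gy sayb] ->].
by rewrite inE groupM //= conjsgM (normP (subsetP (cent_sub a) c cac)).
Qed.

Lemma card_Ntrans a b : #|Ntrans G a b| = (\sum_(x in G) (a :^ x \subset b)%g)%N.
Proof.
rewrite -sum1dep_card big_mkcond [RHS]big_mkcond /=.
by apply: eq_bigr => x _; case: (x \in G); case: (a :^ x \subset b)%g.
Qed.

Lemma card_cent_conj a x : (x \in G)%g -> #|'C_G(a :^ x)%g| = #|'C_G(a)%g|.
Proof. by move=> Gx; rewrite centJ -{1}(conjGid Gx) -conjIg cardJg. Qed.

Definition chain_cent s := 'C_G(\bigcup_(a in s) gval a)%g.

Definition chain_weight s : int := - chain_sign s * #|chain_cent s|%:Z.

Lemma in_chain_cent s g :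
  (g \in chain_cent s) = (g \in G) && [forall a in s, g \in 'C(a)%g].
Proof.
rewrite inE cent_bigcup; congr (_ && _).
by apply/bigcapP/forall_inP => cs a sa; apply: cs.
Qed.

Lemma chain_cent0 : chain_cent set0 = G.
Proof. by rewrite /chain_cent big_set0 cent_set0 setIT. Qed.

Lemma chain_cent_greatest s a : greatest s a -> chain_cent s = 'C_G(a)%g.
Proof.
case/andP=> sa /forall_inP ga; congr (_ :&: 'C(_))%g.
by apply/eqP; rewrite eqEsubset (bigcup_sup a sa) andbT; apply/bigcupsP.
Qed.

Lemma chain_cent_setU1 s a y :
  y \in s -> (a \subset y)%g -> chain_cent (a |: s) = chain_cent s.
Proof.
move=> sy ay; rewrite /chain_cent bigcup_setU big_set1; congr (_ :&: 'C(_))%g.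
by apply/setUidPr; apply: subset_trans ay (bigcup_sup y sy).
Qed.

Definition bottom_weight b : int :=
  \sum_(s | is_chain Fobjs s && least s b) chain_weight s.

Definition top_weight a : int :=
  \sum_(s | is_chain Fobjs s && greatest s a) - chain_sign s.

(* Toggling a on the chains above a preserves their centralizers. *)
Lemma sum_bottom_weight a : a \in Fobjs ->
  \sum_(b | (b \in Fobjs) && (a \subset b)%g) bottom_weight b = #|'C_G(a)%g|%:Z.
Proof.
move=> Fa; rewrite sum_exchange_uniq => [|s b b' /andP[_ lb] /andP[_ lb']]; last first.
  exact: least_uniq lb lb'.
rewrite (eq_bigl _ _ (fun s => exists_least_above Fobjs s a)).
set U := [set b in Fobjs | a \subset b]%g.
have Ua : a \in U by rewrite inE Fa subxx.
have aU y : y \in U -> nested y a by rewrite inE /nested => /andP[_ ->]; rewrite orbT.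
have toggle_cancel :
    \sum_(s | is_chain U s) - chain_sign s * #|chain_cent (a |: s)|%:Z = 0.
  apply: (sum_sign_reversing_involution (toggleK a)) => s cs.
    have sU := is_chain_sub cs.
    by apply: is_chain_toggle cs => // y sy; apply: aU (subsetP sU y sy).
  by rewrite setU1_toggle /chain_sign sign_toggle !mulNr opprK.
move: toggle_cancel; rewrite (bigD1 set0) ?is_chain0 //= => /eqP.
rewrite addr_eq0 setU0 (@chain_cent_greatest [set a] a); last first.
  by rewrite /greatest set11; apply/forall_inP => y /set1P->.
rewrite /chain_sign cards0 expr0 mulN1r eqr_opp => /eqP ->.
apply: eq_bigr => s /andP[cs /set0Pn[y sy]]; rewrite /chain_weight.
rewrite (chain_cent_setU1 sy) //.
by move: (subsetP (is_chain_sub cs) y sy); rewrite inE => /andP[].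
Qed.

Lemma sum_top_weight b : b \in Fobjs ->
  \sum_(a | (a \in Fobjs) && (a \subset b)%g) top_weight a = 1.
Proof.
move=> Fb; rewrite sum_exchange_uniq => [|s a a' /andP[_ ga] /andP[_ ga']]; last first.
  exact: greatest_uniq ga ga'.
rewrite (eq_bigl _ _ (fun s => exists_greatest_below Fobjs s b)).
set D := [set a in Fobjs | a \subset b]%g.
have : signed_chain_sum D = 0.
  apply: (signed_chain_sum_cone (z := b)); first by rewrite inE Fb subxx.
  by move=> y; rewrite inE /nested => /andP[_ ->].
rewrite /signed_chain_sum (bigD1 set0) ?is_chain0 //= => /eqP.
by rewrite addr_eq0 sumrN /chain_sign cards0 expr0 => /eqP <-.
Qed.

Lemma sum_cent_top_weight :
  \sum_(a | a \in Fobjs) #|'C_G(a)%g|%:Z * top_weight a =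
  \sum_(s | is_chain Fobjs s && (s != set0)) chain_weight s.
Proof.
under eq_bigr => a _.
  rewrite mulr_sumr (eq_bigr (fun s => chain_weight s)) => [|s /andP[_ ga]]; last first.
    by rewrite /chain_weight (chain_cent_greatest ga) mulrN mulNr mulrC.
over.
rewrite sum_exchange_uniq => [|s a a' /andP[_ ga] /andP[_ ga']]; last first.
  exact: greatest_uniq ga ga'.
exact: eq_bigl (fun s => exists_greatest Fobjs s).
Qed.

End FrobeniusCategory.

Section Weightings.
Variables (gT : finGroupType) (G : {group gT}) (p : nat).
Implicit Types (a b : {group gT}) (F : {group gT} -> rat).

Let natr_card_neq0 (H : {group gT}) : #|H|%:R != 0 :> rat.
Proof. by rewrite pnatr_eq0 -lt0n cardG_gt0. Qed.

Lemma Fhom_ratE a b : a \in Fobjs G p ->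
  (Fhom G a b)%:R = #|Ntrans G a b|%:R / #|'C_G(a)%g|%:R :> rat.
Proof.
by move=> Fa; rewrite -(Fhom_mul_card_cent b (Fobjs_sub Fa)) natrM mulfK.
Qed.

Lemma sum_Ntrans_r a F :
  \sum_(b | b \in Fobj G p) #|Ntrans G a b|%:R * F b =
  \sum_(x in G) \sum_(b | (b \in Fobjs G p) && (a :^ x \subset b)%g) F b.
Proof.
under eq_bigr => b _ do rewrite card_Ntrans natr_sum mulr_suml.
rewrite exchange_big /=; apply: eq_bigr => x Gx; rewrite [RHS]big_mkcondr /=.
apply: eq_big => [b | b _]; first by rewrite [RHS]inE.
by case: (a :^ x \subset b)%g; rewrite ?mul1r ?mul0r.
Qed.

Lemma sum_Ntrans_l b F :
  \sum_(a | a \in Fobj G p) F a * #|Ntrans G a b|%:R =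
  \sum_(x in G) \sum_(a | (a \in Fobjs G p) && (a \subset b :^ x^-1)%g) F a.
Proof.
under eq_bigr => a _ do rewrite card_Ntrans natr_sum mulr_sumr.
rewrite exchange_big /=; apply: eq_bigr => x Gx; rewrite [RHS]big_mkcondr /=.
apply: eq_big => [a | a _]; first by rewrite [RHS]inE.
by rewrite sub_conjg; case: (a \subset b :^ x^-1)%g; rewrite ?mulr1 ?mulr0.
Qed.

Definition weightF b : rat := (bottom_weight G p b)%:~R / #|G|%:R.

Definition coweightF a : rat :=
  #|'C_G(a)%g|%:R * (top_weight G p a)%:~R / #|G|%:R.

Lemma weightF_weighting : is_weighting G p weightF.
Proof.
move=> a Fa; have {}Fa : a \in Fobjs G p by rewrite inE.
under eq_bigr => b _ do rewrite Fhom_ratE // mulrAC.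
rewrite -mulr_suml sum_Ntrans_r.
rewrite (eq_bigr (fun=> #|'C_G(a)%g|%:R / #|G|%:R)) => [|x Gx]; last first.
  rewrite /weightF -mulr_suml -rmorph_sum /=.
  by rewrite (sum_bottom_weight (Fobjs_conj Gx Fa)) card_cent_conj.
by rewrite sumr_const; field; rewrite !natr_card_neq0.
Qed.

Lemma coweightF_coweighting : is_coweighting G p coweightF.
Proof.
move=> b Fb; have {}Fb : b \in Fobjs G p by rewrite inE.
rewrite (eq_bigr (fun a => (top_weight G p a)%:~R / #|G|%:R * #|Ntrans G a b|%:R))
    => [|a Fa]; last first.
  by rewrite Fhom_ratE ?inE // /coweightF; field; rewrite !natr_card_neq0.
rewrite sum_Ntrans_l.
rewrite (eq_bigr (fun=> #|G|%:R^-1)) => [|x Gx]; last first.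
  rewrite -mulr_suml -rmorph_sum /=.
  by rewrite (sum_top_weight (Fobjs_conj (groupVr Gx) Fb)) mul1r.
by rewrite sumr_const; field; rewrite natr_card_neq0.
Qed.

Lemma wsum_coweightF :
  wsum G p coweightF =
  (\sum_(s | is_chain (Fobjs G p) s) chain_weight G s)%:~R / #|G|%:R + 1.
Proof.
have sum_nonempty : \sum_(s | is_chain (Fobjs G p) s && (s != set0)) chain_weight G s =
    \sum_(s | is_chain (Fobjs G p) s) chain_weight G s + #|G|%:Z.
  rewrite [in RHS](bigD1 set0) ?is_chain0 //= /chain_weight chain_cent0 /chain_sign.
  by rewrite cards0 expr0 mulN1r addrAC addNr add0r.
rewrite /wsum /coweightF -mulr_suml.
transitivity ((\sum_(s | is_chain (Fobjs G p) s && (s != set0)) chain_weight G s)%:~R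
               / #|G|%:R : rat).
  rewrite -sum_cent_top_weight rmorph_sum /=; congr (_ / _).
  by apply: eq_big => [a | a _]; rewrite ?[RHS]inE ?intrM.
by rewrite sum_nonempty rmorphD /= mulrDl -[#|G|%:~R : rat]/(#|G|%:R) divff.
Qed.

End Weightings.

Section CentralizedChains.
Variables (gT : finGroupType) (G : {group gT}) (p : nat).
Local Open Scope group_scope.
Implicit Types (s : {set {group gT}}) (a : {group gT}) (y : {set {group gT}} * gT).

Definition conj_pair_action := prod_action ('JG^*)%act (@conjg_action gT).

Definition centralized_chain y :=
  is_chain (Fobjs G p) y.1 && (y.2 \in chain_cent G y.1).

Definition pair_sign y : int := if centralized_chain y then - chain_sign y.1 else 0.

Lemma sum_chain_weight_pairs :
  \sum_(s | is_chain (Fobjs G p) s) chain_weight G s = \sum_y pair_sign y.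
Proof.
rewrite -(pair_big xpredT xpredT (fun s g => pair_sign (s, g))) /= big_mkcond /=.
apply: eq_bigr => s _; rewrite /pair_sign /centralized_chain /=.
case: (is_chain _ s); last by rewrite big1.
by rewrite -big_mkcond /= sumr_const /chain_weight -mulr_natr natz.
Qed.

Lemma centralized_chain_act y x :
  x \in G -> centralized_chain y -> centralized_chain (conj_pair_action y x).
Proof.
case: y => s g Gx; rewrite /centralized_chain !in_chain_cent /=.
case/and3P=> /is_chainP[sF ns] Gg /forall_inP cgs; apply/and3P; split.
- apply/is_chainP; split.
    by apply/subsetP => _ /imsetP[a sa ->]; apply/Fobjs_conj/(subsetP sF).
  by move=> _ _ /imsetP[a sa ->] /imsetP[b sb ->]; rewrite /nested /= !conjSg; apply: ns.
- by rewrite groupJ.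
apply/forall_inP => _ /imsetP[a sa ->] /=.
by rewrite centJ memJ_conjg cgs.
Qed.

Lemma pair_sign_act y x :
  x \in G -> pair_sign (conj_pair_action y x) = pair_sign y.
Proof.
move=> Gx; rewrite /pair_sign; have [cy | ncy] := boolP (centralized_chain y).
  by rewrite centralized_chain_act //= /chain_sign card_setact.
case: ifP => // cyx; case/negP: ncy.
by rewrite -(actK conj_pair_action x y) centralized_chain_act ?groupV.
Qed.

Section FixedPairs.
Variable Q : {group gT}.
Hypotheses (sQG : Q \subset G) (pQ : p.-group Q) (ntQ : Q :!=: 1).

Let Fobjs_stable g := [set a in Fobjs G p | (g \in 'C(a)) && (Q \subset 'N(a))].

Let signed_chain_sum_stable g : g \in 'C_G(Q) -> signed_chain_sum (Fobjs_stable g) = 0.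
Proof.
case/setIP=> Gg cQg; apply: (signed_chain_sum_join (Q := Q)).
  by rewrite !inE sQG pQ ntQ cQg normG.
move=> a; rewrite !inE => /andP[/and3P[saG pa nta] /andP[cag nQa]].
have paQ : p.-group (a <*> Q) by rewrite norm_joinEr // pgroupM pa pQ.
rewrite /= join_subG saG sQG paQ centY !inE cag cQg.
rewrite (subset_trans (joing_subr a Q) (normG _)) !andbT /=.
by apply: contraNneq ntQ => aQ1; rewrite -subG1 -aQ1 joing_subr.
Qed.

Let fixed_centralized_chain s g :
  (Q \subset 'C[(s, g) | conj_pair_action]) && centralized_chain (s, g) =
  (g \in 'C_G(Q)) && is_chain (Fobjs_stable g) s.
Proof.
rewrite /centralized_chain astab1_prod subsetI astab1J sub_cent1 in_chain_cent.
rewrite is_chain_setIdP /= in_setI.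
have [cs | ncs] := boolP (is_chain (Fobjs G p) s); last by rewrite !andbF.
rewrite (astab1_chain cs) /=; apply/and3P/andP.
  case=> /andP[/bigcapsP nQs cQg] Gg /forall_inP cgs; rewrite Gg cQg.
  by split=> //; apply/forall_inP => a sa; rewrite cgs ?nQs.
case=> /andP[Gg cQg] /forall_inP stab_s; rewrite Gg cQg; split=> //.
  by apply/andP; split=> //; apply/bigcapsP => a /stab_s /andP[].
by apply/forall_inP => a /stab_s /andP[].
Qed.

Lemma sum_fixed_pair_sign :
  \sum_(y | Q \subset 'C[y | conj_pair_action]) pair_sign y = 0.
Proof.
pose F s g : int :=
  if (g \in 'C_G(Q)) && is_chain (Fobjs_stable g) s then - chain_sign s else 0.
rewrite big_mkcond (eq_bigr (fun y => F y.1 y.2)) => [|[s g] _]; last first.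
  by rewrite /F -fixed_centralized_chain /pair_sign; case: (Q \subset _).
rewrite -(pair_big xpredT xpredT F) exchange_big /=; apply: big1 => g _.
rewrite /F; have [cQg | _] := boolP (g \in 'C_G(Q)); last by rewrite big1.
by rewrite -big_mkcond sumrN /= -/(signed_chain_sum _) signed_chain_sum_stable ?oppr0.
Qed.

End FixedPairs.

(* Brown's theorem: a Sylow p-subgroup acts on the pairs (chain, centralizing element). *)
Lemma dvdz_sum_chain_weight :
  ((#|G|`_p)%N%:Z %| \sum_(s | is_chain (Fobjs G p) s) chain_weight G s)%Z.
Proof.
have [S sylS] := Sylow_exists p G; have sSG := pHall_sub sylS.
rewrite -(card_Hall sylS) sum_chain_weight_pairs.
apply: (dvdz_card_sum_fixed_sums_eq0 (to := conj_pair_action)) => [y x Sx | R sRS ntR].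
  exact/pair_sign_act/(subsetP sSG).
apply: sum_fixed_pair_sign ntR; first exact: subset_trans sSG.
exact: pgroupS sRS (pHall_pgroup sylS).
Qed.

End CentralizedChains.

Theorem corollary5p2 (gT : finGroupType) (G : {group gT}) (p : nat) :
  prime p ->
  (exists k : {group gT} -> rat, is_weighting G p k) /\
  (exists k : {group gT} -> rat, is_coweighting G p k) /\
  (forall k : {group gT} -> rat, is_weighting G p k ->
     exists z : int, ((#|G|`_p^')%:R * wsum G p k = z%:~R)%R).
Proof.
(* The argument works for every p. *)
move=> _; split; first by exists (weightF G p); apply: weightF_weighting.
split; first by exists (coweightF G p); apply: coweightF_coweighting.
move=> k wk; have [q sum_q] := dvdzP (@dvdz_sum_chain_weight _ G p).
exists (q + (#|G|`_p^')%:Z).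
rewrite (wsum_weighting_coweighting wk (@coweightF_coweighting _ G p)).
rewrite wsum_coweightF sum_q.
have partG : #|G|%:R = (#|G|`_p)%:R * (#|G|`_p^')%:R :> rat.
  by rewrite -natrM partnC.
rewrite rmorphD rmorphM /= -!pmulrn partG.
by field; rewrite !pnatr_eq0 -!lt0n !part_gt0.
Qed.
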